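(* Let $(\rho,\sigma)\in\mathfrak V$ and $P,Q\in W^{(l)}\setminus\{0\}$ with $[Q,P]\in K^\times$. If $[Q,P]_{\rho,\sigma}=0$, then there exists $(\rho'',\sigma'')\in\overline{\mathfrak V}$ with $(\rho'',\sigma'')<(\rho,\sigma)$ such that $[Q,P]_{\rho',\sigma'}=0$ for all $(\rho',\sigma')\in\mathfrak V$ with $(\rho'',\sigma'')<(\rho',\sigma')<(\rho,\sigma)$.
   Context: $K$ is a field of characteristic zero, $l\in\mathbb{N}$. $W^{(l)}$ is the associative $K$-algebra with $K$-basis $\{X^{i/l}Y^j:i\in\mathbb{Z},j\in\mathbb{N}_0\}$, powers of $X$ multiplying as Laurent monomials and $[Y,X^\alpha]=\alpha X^{\alpha-1}$ for $\alpha\in\frac1l\mathbb{Z}$. $\Psi^{(l)}(X^{i/l}Y^j)=x^{i/l}y^j\in K[x^{\pm1/l},y]$; supports are sets of exponents with nonzero coefficient. $\overline{\mathfrak V}=\{(\rho,\sigma)\in\mathbb{Z}^2:\gcd(\rho,\sigma)=1,\rho+\sigma\ge0\}$, $\mathfrak V$ the subset with $\rho+\sigma>0$. Total order on $\overline{\mathfrak V}$: $(1,-1)<(\rho,\sigma)<(-1,1)$ for $(\rho,\sigma)\in\mathfrak V$, and on $\mathfrak V$, $(\rho_1,\sigma_1)\le(\rho,\sigma)$ iff $\rho_1\sigma-\sigma_1\rho\ge0$. For $P\ne0$, $v_{\rho,\sigma}(P)=\max\{\rho a+\sigma b:(a,b)\in\mathrm{Supp}(P)\}$, $\ell_{\rho,\sigma}(P)$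 = sum of terms of $\Psi^{(l)}(P)$ attaining it. $[Q,P]_{\rho,\sigma}:=0$ if $[Q,P]=0$ or $v_{\rho,\sigma}([Q,P])<v_{\rho,\sigma}(Q)+v_{\rho,\sigma}(P)-(\rho+\sigma)$, and $:=\ell_{\rho,\sigma}([Q,P])$ otherwise. *)

From HB Require Import structures.
From mathcomp Require Import all_boot all_order all_algebra.
Set Implicit Arguments. Unset Strict Implicit. Unset Printing Implicit Defensive.
Import Order.TTheory GRing.Theory Num.Theory.
Local Open Scope ring_scope.

(* Elements of W^(l) are represented as finite lists of terms (c, i, j),
   standing for the sum of c * X^(i/l) Y^j.  The element itself is the
   coefficient function coefW (the list is only a presentation). *)
Definition W (K : Type) := seq (K * int * nat).

Section Weyl.
Variable K : fieldType.
Variable l : nat.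

Definition coefW (P : W K) (ij : int * nat) : K :=
  \sum_(t <- P | (t.1.2 == ij.1) && (t.2 == ij.2)) t.1.1.

Definition isZeroW (P : W K) : bool :=
  all (fun t => coefW P (t.1.2, t.2) == 0) P.

Definition fallW (i : int) (m : nat) : K :=
  \prod_(r < m) (i%:~R / l%:R - r%:R).

(* (c X^(i1/l) Y^j) (d X^(i2/l) Y^k)
   = sum_m c d C(j,m) (i2/l)_m X^((i1+i2-m l)/l) Y^(j+k-m),
   from [Y, X^a] = a X^(a-1). *)
Definition mulTerm (t u : K * int * nat) : W K :=
  let: (c, i1, j) := t in let: (d, i2, k) := u in
  [seq (c * d * ('C(j, m))%:R * fallW i2 m, i1 + i2 - (m * l)%:Z, (j - m + k)%N)
   | m <- iota 0 j.+1].

Definition mulW (P Q : W K) : W K :=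
  flatten [seq flatten [seq mulTerm t u | u <- Q] | t <- P].

Definition oppW (P : W K) : W K := [seq (- t.1.1, t.1.2, t.2) | t <- P].

Definition commW (Q P : W K) : W K := mulW Q P ++ oppW (mulW P Q).

Definition inKunits (P : W K) : Prop :=
  exists c : K, c != 0 /\ forall ij, coefW P ij = (if ij == (0%:Z, 0%N) then c else 0).

Definition wt (rs : int * int) (ij : int * nat) : rat :=
  rs.1%:~R * (ij.1%:~R / l%:R) + rs.2%:~R * (ij.2)%:R.

Definition suppW (P : W K) : seq (int * nat) :=
  [seq (t.1.2, t.2) | t <- P & coefW P (t.1.2, t.2) != 0].

Definition vW (rs : int * int) (P : W K) : rat :=
  match suppW P with
  | [::] => 0
  | x :: s => foldr (fun y a => Num.max (wt rs y) a) (wt rs x) s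
  end.

Definition ellW (rs : int * int) (P : W K) (ij : int * nat) : K :=
  if (coefW P ij != 0) && (wt rs ij == vW rs P) then coefW P ij else 0.

Definition bracketW (rs : int * int) (Q P : W K) (ij : int * nat) : K :=
  let C := commW Q P in
  if isZeroW C || (vW rs C < vW rs Q + vW rs P - (rs.1 + rs.2)%:~R)
  then 0 else ellW rs C ij.

Definition bracket_zero (rs : int * int) (Q P : W K) : Prop :=
  forall ij, bracketW rs Q P ij = 0.

End Weyl.

Definition nonzeroW (K : fieldType) (P : W K) : Prop := exists ij, coefW P ij != 0.

Definition inVbar (rs : int * int) : bool :=
  (gcdz rs.1 rs.2 == 1) && (0 <= rs.1 + rs.2).
Definition inV (rs : int * int) : bool :=
  (gcdz rs.1 rs.2 == 1) && (0 < rs.1 + rs.2).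

Definition ltV (a b : int * int) : bool :=
  if a == (1, -1) then b != (1, -1)
  else if b == (1, -1) then false
  else if b == (-1, 1) then a != (-1, 1)
  else if a == (-1, 1) then false
  else 0 < a.1 * b.2 - a.2 * b.1.

From mathcomp Require Import all_boot all_order all_algebra.
From mathcomp Require Import ring zify.
Import Order.TTheory GRing.Theory Num.Theory.
Set Implicit Arguments. Unset Strict Implicit. Unset Printing Implicit Defensive.
Local Open Scope ring_scope.

(* Since [Q,P] is a nonzero constant, v_{rho,sigma}([Q,P]) = 0 for every
   direction, so [Q,P]_{rho,sigma} = 0 exactly when
   v(Q) + v(P) - (rho + sigma) > 0.  Fix monomials of Q and P on which v(Q)
   and v(P) are attained at (rho,sigma); the corresponding lower bound for
   v(Q) + v(P) - (rho + sigma) is a linear form L in the direction, positive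
   at (rho,sigma).  Choosing (rho'',sigma'') < (rho,sigma) with L >= 0 there,
   every direction strictly in between is a positive combination of the two
   endpoints, so L, and hence the inequality, stays positive. *)

Section MaxFold.
Variables (T : eqType) (f : T -> rat).

Lemma foldr_max_ge x s y : y \in x :: s ->
  f y <= foldr (fun y a => Num.max (f y) a) (f x) s.
Proof.
elim: s => [|z s IH] /=; first by rewrite inE => /eqP ->.
rewrite !inE le_max => /or3P [/eqP e|/eqP->|h].
- by rewrite IH ?orbT // e mem_head.
- by rewrite lexx.
- by rewrite IH ?orbT // inE h orbT.
Qed.

Lemma foldr_max_mem x s : exists2 y, y \in x :: s &
  f y = foldr (fun y a => Num.max (f y) a) (f x) s.
Proof.
elim: s => [|z s [y hy IH]] /=; first by exists x; rewrite ?mem_head.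
rewrite maxEle; case: ifP => _.
  by exists y => //; move: hy; rewrite !inE => /orP[->|->]; rewrite ?orbT.
by exists z; rewrite // !inE eqxx orbT.
Qed.

End MaxFold.

Section Support.
Variables (K : fieldType) (l : nat).
Implicit Types (P Q : W K) (ij : int * nat) (rs : int * int).

Lemma coefW_neq0_mem P ij : coefW P ij != 0 ->
  exists2 t, t \in P & (t.1.2, t.2) = ij.
Proof.
move=> h; case: (@hasP _ (fun t : K * int * nat => (t.1.2 == ij.1) && (t.2 == ij.2)) P).
  by case=> t ht /andP[/eqP h1 /eqP h2]; exists t => //; rewrite h1 h2 -surjective_pairing.
move=> nomatch; case/eqP: h; rewrite /coefW big1_seq // => t /andP[match_t t_in].
by case: nomatch; exists t.
Qed.

Lemma mem_suppW P ij : (ij \in suppW P) = (coefW P ij != 0).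
Proof.
apply/idP/idP; first by case/mapP => t; rewrite mem_filter => /andP[h _] ->.
move=> h; have [t ht e] := coefW_neq0_mem h.
by apply/mapP; exists t => //; rewrite mem_filter e h.
Qed.

Lemma vW_ge_wt rs P ij : coefW P ij != 0 -> wt l rs ij <= vW l rs P.
Proof.
rewrite -mem_suppW /vW; case: (suppW P) => [//|x s].
exact: foldr_max_ge.
Qed.

Lemma vW_attained rs P : nonzeroW P ->
  exists2 ij, coefW P ij != 0 & vW l rs P = wt l rs ij.
Proof.
case=> ij0; rewrite -mem_suppW /vW.
case: (suppW P) (@mem_suppW P) => [//|x s] supp _.
have [y hy e] := foldr_max_mem (wt l rs) x s.
by exists y; rewrite // -supp.
Qed.

Lemma vW_inKunits rs P : inKunits P -> vW l rs P = 0.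
Proof.
case=> c [_ hP]; rewrite /vW; case: (suppW P) (@mem_suppW P) => [//|x s] supp.
have [y hy <-] := foldr_max_mem (wt l rs) x s.
move: hy; rewrite supp hP; case: (y =P (0, 0%N)) => [-> _|_]; last by rewrite eqxx.
by rewrite /wt /= mul0r !mulr0 addr0.
Qed.

Lemma bracket_zeroE rs Q P : inKunits (commW l Q P) ->
  bracket_zero l rs Q P <-> 0 < vW l rs Q + vW l rs P - (rs.1 + rs.2)%:~R.
Proof.
move=> hC; have [c [hc hcoef]] := hC.
have c00 : coefW (commW l Q P) (0, 0%N) = c by rewrite hcoef eqxx.
have nzC : isZeroW (commW l Q P) = false.
  have c00_neq0 : coefW (commW l Q P) (0, 0%N) != 0 by rewrite c00.
  have [t ht e] := coefW_neq0_mem c00_neq0.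
  by apply/negP => /allP /(_ t ht); rewrite e c00 (negbTE hc).
rewrite /bracket_zero /bracketW nzC (vW_inKunits rs hC) /=.
split; last by move=> h ij; rewrite h.
move=> /(_ (0, 0%N)); case: ifP => [//|_].
rewrite /ellW c00 hc (vW_inKunits rs hC) /wt /= mul0r !mulr0 addr0 eqxx /=.
by move/eqP; rewrite (negbTE hc).
Qed.

End Support.

(* l times the lower bound wt(ij1) + wt(ij2) - (rho + sigma) for
   v(Q) + v(P) - (rho + sigma); it is an integral linear form in (rho,sigma). *)
Definition bform (l : nat) (ij1 ij2 : int * nat) (x : int * int) : int :=
  (ij1.1 + ij2.1 - l%:Z) * x.1 + (((ij1.2 + ij2.2)%N)%:Z * l%:Z - l%:Z) * x.2.

Lemma wt_sum_bform (l : nat) (x : int * int) (ij1 ij2 : int * nat) : (0 < l)%N ->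
  wt l x ij1 + wt l x ij2 - (x.1 + x.2)%:~R = (bform l ij1 ij2 x)%:~R / l%:R.
Proof.
move=> l_gt0; case: ij1 ij2 => [i1 j1] [i2 j2].
rewrite /wt /bform /= !(intrD, intrM, intrB) -!pmulrn natrD.
have l_neq0 : (l%:R : rat) != 0 by rewrite pnatr_eq0 -lt0n.
by field.
Qed.

Section Brackets.
Variables (K : fieldType) (l : nat) (P Q : W K).
Hypotheses (l_gt0 : (0 < l)%N) (QP_unit : inKunits (commW l Q P)).

Lemma bform_gt0_bracket_zero rs ij1 ij2 :
  vW l rs Q = wt l rs ij1 -> vW l rs P = wt l rs ij2 ->
  bracket_zero l rs Q P -> 0 < bform l ij1 ij2 rs.
Proof.
move=> eQ eP /(bracket_zeroE rs QP_unit).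
by rewrite eQ eP wt_sum_bform // pmulr_lgt0 ?invr_gt0 ?ltr0n // ltr0z.
Qed.

Lemma bracket_zero_bform_gt0 rs ij1 ij2 :
  coefW Q ij1 != 0 -> coefW P ij2 != 0 ->
  0 < bform l ij1 ij2 rs -> bracket_zero l rs Q P.
Proof.
move=> hQ hP hL; apply/(bracket_zeroE rs QP_unit).
apply: (lt_le_trans (_ : 0 < wt l rs ij1 + wt l rs ij2 - (rs.1 + rs.2)%:~R)).
  by rewrite wt_sum_bform // pmulr_lgt0 ?invr_gt0 ?ltr0n // ltr0z.
by rewrite lerD2r lerD // vW_ge_wt.
Qed.

End Brackets.

Definition det2 (u v : int * int) : int := u.1 * v.2 - u.2 * v.1.

Lemma ltV_det2 (u v : int * int) : 0 < u.1 + u.2 -> 0 < v.1 + v.2 ->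
  ltV u v = (0 < det2 u v).
Proof.
case: u v => [u1 u2] [v1 v2] /= hu hv.
have notE (a b : int) : 0 < a + b -> ((a, b) == (1, -1)) = false /\ ((a, b) == (-1, 1)) = false.
  by move=> h; split; apply/eqP => -[e1 e2]; rewrite e1 e2 in h.
by rewrite /ltV; have [-> ->] := notE _ _ hu; have [-> ->] := notE _ _ hv.
Qed.

Lemma inV_inVbar (u : int * int) : inV u -> inVbar u.
Proof. by case/andP => g /ltW s; apply/andP. Qed.

(* Cramer: det2 u v * x = det2 x v * u + det2 u x * v; applied to the form
   x.1 + x.2 it also shows det2 u v > 0. *)
Lemma ltV_between_form_gt0 (a b : int) (u v x : int * int) :
  inV u -> inV v -> inV x -> ltV u x -> ltV x v ->
  0 <= a * u.1 + b * u.2 -> 0 < a * v.1 + b * v.2 -> 0 < a * x.1 + b * x.2.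
Proof.
move=> /andP[_ hu] /andP[_ hv] /andP[_ hx].
rewrite !ltV_det2 // => hux hxv hLu hLv.
have cramer (c d : int) : det2 u v * (c * x.1 + d * x.2) =
    det2 x v * (c * u.1 + d * u.2) + det2 u x * (c * v.1 + d * v.2).
  by rewrite /det2; ring.
have huv : 0 < det2 u v.
  rewrite -(pmulr_lgt0 _ (_ : 0 < 1 * x.1 + 1 * x.2)) ?cramer; last lia.
  by apply: addr_gt0; apply: mulr_gt0 => //; lia.
rewrite -(pmulr_rgt0 _ huv) cramer.
by apply: ltr_wpDl; [apply: mulr_ge0; lia | apply: mulr_gt0].
Qed.

Lemma gcdz_witness (k r s : int) :
  gcdz (k * (r + s) * r + 1) (k * (r + s) * s - 1) = 1.
Proof. by apply/eqP/coprimezP; exists (1 - k * r * s, k * r * r) => /=; ring. Qed.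

(* The witness (k(r+s)r + 1, k(r+s)s - 1) has determinant r + s against
   (r,s), and the form takes the value k(r+s)(ar + bs) + a - b on it. *)
Lemma exists_ltV_form_ge0 (a b r s : int) : 0 < r + s -> 0 < a * r + b * s ->
  exists u : int * int, [/\ inV u, ltV u (r, s) & 0 <= a * u.1 + b * u.2].
Proof.
move=> rs_gt0 L_gt0.
have [k [k_ge1 k_ge]] : exists k : int, 1 <= k /\ b - a <= k.
  by have [h|h] := lerP (b - a) 1; [exists 1 | exists (b - a)]; lia.
have sum_gt0 : 0 < k * (r + s) * r + 1 + (k * (r + s) * s - 1).
  have -> : k * (r + s) * r + 1 + (k * (r + s) * s - 1) = k * (r + s) * (r + s)
    by ring.
  by rewrite !mulr_gt0 //; lia.
exists (k * (r + s) * r + 1, k * (r + s) * s - 1); split => /=.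
- by rewrite /inV /= gcdz_witness eqxx.
- rewrite ltV_det2 /det2 //=.
  by have -> : (k * (r + s) * r + 1) * s - (k * (r + s) * s - 1) * r = r + s by ring.
- have -> : a * (k * (r + s) * r + 1) + b * (k * (r + s) * s - 1) =
            k * (r + s) * (a * r + b * s) + (a - b) by ring.
  have : 0 <= k * ((r + s) * (a * r + b * s) - 1).
    by rewrite mulr_ge0 ?subr_ge0 ?mulr_ege1 //; lia.
  rewrite mulrBr mulr1 mulrA; lia.
Qed.

Theorem corollary3p4 (K : fieldType) (l : nat) (rs : int * int) (P Q : W K) :
  [pchar K] =i pred0 -> (0 < l)%N ->
  inV rs -> nonzeroW P -> nonzeroW Q ->
  inKunits (commW l Q P) ->
  bracket_zero l rs Q P ->
  exists rs'' : int * int,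
    [/\ inVbar rs'', ltV rs'' rs &
        forall rs' : int * int, inV rs' -> ltV rs'' rs' -> ltV rs' rs ->
          bracket_zero l rs' Q P].
Proof.
move=> _ l_gt0 rs_inV nzP nzQ QP_unit rs_zero.
have [ij1 Q_ij1 vQ] := vW_attained l rs nzQ.
have [ij2 P_ij2 vP] := vW_attained l rs nzP.
have L_rs := bform_gt0_bracket_zero l_gt0 QP_unit vQ vP rs_zero.
have rs_gt0 : 0 < rs.1 + rs.2 by case/andP: rs_inV.
have [u [u_inV u_lt L_u]] := exists_ltV_form_ge0 rs_gt0 L_rs.
rewrite -surjective_pairing in u_lt.
exists u; split; [exact: inV_inVbar | exact: u_lt | move=> x x_inV ux xrs].
apply: (bracket_zero_bform_gt0 l_gt0 QP_unit Q_ij1 P_ij2).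
exact: (ltV_between_form_gt0 u_inV rs_inV x_inV ux xrs L_u L_rs).
Qed.
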